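(* Let $r=(r(k))_{k\in2\mathbb{Z}}\in\ell^2(2\mathbb{Z})$ with $r(k)\ge0$. For $n,s\in\mathbb{N}$ and $m\in n+2\mathbb{Z}$ define $$\sigma_1(n,s;m)=\sum_{j_1,\dots,j_s\neq n}\frac{r(m+j_1)}{|n-j_1|}\cdot\frac{r(j_1+j_2)}{|n-j_2|}\cdots\frac{r(j_{s-1}+j_s)}{|n-j_s|},$$ where $j_1,\dots,j_s$ range over $n+2\mathbb{Z}\setminus\{n\}$. Let $\tilde\rho_n=\mathcal{E}_n(r)+2\|r\|/\sqrt n$. Then for $n\ge4$: $$\sigma_1(n,1;m)\le\tilde\rho_n\ \text{ if } |m-n|\le n/2,\qquad \sigma_1(n,1;m)\le\|r\|\ \text{ for all } m\in n+2\mathbb{Z},$$ and, for all $p\in\mathbb{N}$ (and, for the second inequality, also $p=0$) and all $m\in n+2\mathbb{Z}$, $$\sigma_1(n,2p;m)\le(2\|r\|\tilde\rho_n)^p,\qquad \sigma_1(n,2p+1;m)\le\|r\|\,(2\|r\|\tilde\rho_n)^p.$$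
   Context: $\|r\|$ denotes the $\ell^2$ norm of $r$, and $\mathcal{E}_n(r)=\left(\sum_{|k|\ge n}|r(k)|^2\right)^{1/2}$ is the $\ell^2$-norm of the tail of $r$. *)

From HB Require Import structures.
From mathcomp Require Import all_boot all_order all_algebra.
From mathcomp Require Import all_classical all_reals all_analysis.
Set Implicit Arguments. Unset Strict Implicit. Unset Printing Implicit Defensive.
Import Order.TTheory GRing.Theory Num.Theory.
Local Open Scope classical_set_scope.
Local Open Scope ring_scope.

(* r : 2Z -> R is represented by a function int -> R; only its values on
   even integers are ever used. *)
Definition evenz (k : int) : Prop := (2 %| k)%Z.

Definition admissible (n : nat) (j : int) : Prop :=
  (2 %| (j - n%:Z))%Z /\ j <> n%:Z.

Fixpoint chain_term (R : realType) (r : int -> R) (n : nat) (m : int)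
    (js : seq int) : R :=
  match js with
  | [::] => 1
  | j :: js' => r (m + j) / (`|n%:Z - j|%:~R) * chain_term r n j js'
  end.

Definition sigma1 (R : realType) (r : int -> R) (n s : nat) (m : int) : \bar R :=
  (\esum_(js in [set js : seq int | size js = s /\ forall j, j \in js -> admissible n j])
      (chain_term r n m js)%:E)%R.

Definition sqnorm2Z (R : realType) (r : int -> R) : \bar R :=
  (\esum_(k in evenz) (r k ^+ 2)%:E)%R.

Definition l2_2Z (R : realType) (r : int -> R) : Prop :=
  (sqnorm2Z r < +oo)%E.

Definition norm2Z (R : realType) (r : int -> R) : R := Num.sqrt (fine (sqnorm2Z r)).

Definition tail2Z (R : realType) (r : int -> R) (n : nat) : R :=
  Num.sqrt (fine (\esum_(k in [set k | evenz k /\ (n%:Z <= `|k|)%R]) (r k ^+ 2)%:E)%R).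

Definition rho_tilde (R : realType) (r : int -> R) (n : nat) : R :=
  tail2Z r n + 2 * norm2Z r / Num.sqrt (n%:R).

From HB Require Import structures.
From mathcomp Require Import all_boot all_order all_algebra.
From mathcomp Require Import all_classical all_reals all_analysis.
From mathcomp Require Import zify ring lra.
Import Order.TTheory GRing.Theory Num.Theory.
Set Implicit Arguments. Unset Strict Implicit.
Local Open Scope classical_set_scope.
Local Open Scope ring_scope.

(* sigma_1(n, s; .) is dominated by the s-th power of the positive kernel
   K(m, j) = r(m + j) / |n - j| applied to 1, since
   sigma_1(n, s + 1; m) <= sum_j K(m, j) sigma_1(n, s; j).  By Cauchy-Schwarz each
   row sum of K is at most ||r||, because sum_{j <> n} |n - j|^-2 <= 1.  For a row
   with |m - n| <= n/2 it is even at most rho_n: either |m + j| >= n and r(m + j)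
   lies in the tail E_n(r), or |n - j| > n/2, and these weights have square sum at
   most 4/n.  Hence two steps of K cost at most 2 ||r|| rho_n: the rows near n
   contribute rho_n ||r||, the far ones ||r|| (2 ||r|| / sqrt n) <= ||r|| rho_n. *)

Section esum_bounds.
Context {R : realType} {T : choiceType}.
Implicit Types (A B D : set T) (f w : T -> \bar R).

Lemma esumS A B f : A `<=` B -> (\esum_(i in A) f i <= \esum_(i in B) f i)%E.
Proof.
move=> AB; apply: ge_ereal_sup => _ [X [finX XA] <-].
by apply: esum_ge; exists X => //; split => // x /XA /AB.
Qed.

Lemma esumZl_le D (c : R) f : 0 <= c -> (forall i, D i -> (0 <= f i)%E) ->
  (\esum_(i in D) (c%:E * f i) <= c%:E * \esum_(i in D) f i)%E.
Proof.
move=> c0 f0; apply: ge_ereal_sup => _ [X [finX XD] <-].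
rewrite fsbig_finite //= big_seq -ge0_sume_distrr; last first.
  by move=> i; rewrite in_fset_set // inE => /XD /f0.
rewrite -big_seq -fsbig_finite //; apply: lee_wpmul2l; first by rewrite lee_fin.
by apply: esum_ge; exists X.
Qed.

Lemma esum_mul_le D w f (c : R) : 0 <= c -> (forall i, D i -> (0 <= w i)%E) ->
  (forall i, D i -> (f i <= c%:E)%E) ->
  (\esum_(i in D) (w i * f i) <= c%:E * \esum_(i in D) w i)%E.
Proof.
move=> c0 w0 fc; apply: le_trans (esumZl_le c0 w0).
by apply: le_esum => i Di; rewrite muleC lee_wpmul2r ?w0 ?fc.
Qed.

Lemma esum_comp_le {T' : choiceType} (E : set T') (S : set T) (e : T' -> T) f :
  set_inj E e -> (forall j, E j -> S (e j)) ->
  (\esum_(j in E) f (e j) <= \esum_(k in S) f k)%E.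
Proof.
by move=> e_inj ES; rewrite -esum_image //; apply: esumS => _ [j Ej <-]; exact: ES.
Qed.

End esum_bounds.

Lemma le_mul_of_amgm (R : realFieldType) (x a b : R) : 0 <= a -> 0 <= b ->
  (forall t, 0 < t -> x <= (t * a ^+ 2 + b ^+ 2 / t) / 2) -> x <= a * b.
Proof.
move=> a0 b0 x_le; apply/ler_addgt0Pr => e e0.
(* take [t = (b + d) / (a + d)] with [d] small enough that [(a + d) (b + d) <= a b + e] *)
pose d := e / (a + b + e + 1).
have d0 : 0 < d by rewrite divr_gt0 //; lra.
have de : d * (a + b + e + 1) = e by rewrite /d mulrVK ?unitfE ?gt_eqF //; lra.
have ad0 : 0 < a + d by lra.
have bd0 : 0 < b + d by lra.
have t0 : 0 < (b + d) / (a + d) by rewrite divr_gt0.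
have h1 : (b + d) / (a + d) * a ^+ 2 <= (b + d) * (a + d).
  by rewrite mulrAC ler_pdivrMr // -mulrA ler_pM2l //; nra.
have h2 : b ^+ 2 / ((b + d) / (a + d)) <= (b + d) * (a + d).
  rewrite invf_div mulrA ler_pdivrMr //.
  have bbd : b ^+ 2 <= (b + d) ^+ 2 by nra.
  have := ler_wpM2r (ltW ad0) bbd; nra.
have h3 : (b + d) * (a + d) <= a * b + e by nra.
apply: le_trans (x_le _ t0) _; lra.
Qed.

Lemma esum_Cauchy_Schwarz (R : realType) (T : choiceType) (E : set T) (f g : T -> R)
    (a b : R) :
  (forall i, E i -> 0 <= f i) -> (forall i, E i -> 0 <= g i) -> 0 <= a -> 0 <= b ->
  (\esum_(i in E) (f i ^+ 2)%:E <= (a ^+ 2)%:E)%E ->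
  (\esum_(i in E) (g i ^+ 2)%:E <= (b ^+ 2)%:E)%E ->
  (\esum_(i in E) (f i * g i)%:E <= (a * b)%:E)%E.
Proof.
move=> f0 g0 a0 b0 f2 g2.
have sq0 (h : T -> R) i : (0 <= (h i ^+ 2)%:E)%E by rewrite lee_fin sqr_ge0.
(* pointwise AM-GM [f g <= (t f^2 + g^2 / t) / 2], summed *)
have amgm t : 0 < t ->
    (\esum_(i in E) (f i * g i)%:E <= ((t * a ^+ 2 + b ^+ 2 / t) / 2)%:E)%E.
  move=> t0; have t2 : 0 <= t / 2 by rewrite divr_ge0 // ltW.
  have t2' : 0 <= (2 * t)^-1 by rewrite invr_ge0 mulr_ge0 // ltW.
  apply: (@le_trans _ _ (\esum_(i in E)
      ((t / 2)%:E * (f i ^+ 2)%:E + (2 * t)^-1%:E * (g i ^+ 2)%:E))%E).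
    apply: le_esum => i Ei; rewrite -!EFinM -EFinD lee_fin -subr_ge0.
    have -> : t / 2 * f i ^+ 2 + (2 * t)^-1 * g i ^+ 2 - f i * g i
        = (t * f i - g i) ^+ 2 / (2 * t) by field; rewrite gt_eqF.
    by rewrite divr_ge0 ?sqr_ge0 // mulr_ge0 // ltW.
  rewrite esumD; last 2 first.
  - by move=> i _; apply: mule_ge0; rewrite ?lee_fin ?sqr_ge0.
  - by move=> i _; apply: mule_ge0; rewrite ?lee_fin ?sqr_ge0.
  apply: le_trans (leeD (esumZl_le t2 (fun i _ => sq0 f i))
                        (esumZl_le t2' (fun i _ => sq0 g i))) _.
  apply: le_trans (leeD (lee_wpmul2l _ f2) (lee_wpmul2l _ g2)) _; rewrite ?lee_fin //.
  suff -> : t / 2 * a ^+ 2 + (2 * t)^-1 * b ^+ 2 = (t * a ^+ 2 + b ^+ 2 / t) / 2 by [].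
  by field; rewrite gt_eqF.
have fg0 : (0 <= \esum_(i in E) (f i * g i)%:E)%E.
  by apply: esum_ge0 => i Ei; rewrite lee_fin mulr_ge0 ?f0 ?g0.
have fg_fin : \esum_(i in E) (f i * g i)%:E \is a fin_num.
  by rewrite ge0_fin_numE //; apply: le_lt_trans (amgm 1 ltr01) _; rewrite ltry.
rewrite -(fineK fg_fin) lee_fin; apply: le_mul_of_amgm => // t t0.
by rewrite -lee_fin fineK // amgm.
Qed.

Definition inv_dist (R : realType) (n : nat) (j : int) : R := (`|n%:Z - j|%:~R)^-1.

Definition tail_weight (R : realFieldType) (a : nat) : R := ((2 * (2 * a + 1))%:R)^-1.

Lemma sqr_inv_even_le (R : realFieldType) (k : nat) :
  ((2 * k.+1)%:R)^-1 ^+ 2 <= tail_weight R k - tail_weight R k.+1 :> R.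
Proof.
rewrite /tail_weight.
have -> : ((2 * k.+1)%:R : R) = 2 * k%:R + 2 by rewrite natrM -addn1 natrD; ring.
have -> : ((2 * (2 * k + 1))%:R : R) = 2 * (2 * k%:R + 1) by rewrite !natrM natrD; ring.
have -> : ((2 * (2 * k.+1 + 1))%:R : R) = 2 * (2 * k%:R + 3).
  by rewrite !natrM natrD -addn1 natrD; ring.
have k0 : (0 : R) <= k%:R by [].
have -> : (2 * (2 * k%:R + 1))^-1 - (2 * (2 * k%:R + 3))^-1
   = ((2 * k%:R + 1) * (2 * k%:R + 3))^-1 :> R by field; rewrite !gt_eqF //; lra.
rewrite exprVn expr2 lef_pV2 ?posrE; nra.
Qed.

Lemma esum_sqr_inv_even (R : realType) (a : nat) :
  (\esum_(i in [set: nat]) ((((2 * (a + i).+1)%:R)^-1 ^+ 2 : R)%:E)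
     <= (tail_weight R a)%:E)%E.
Proof.
rewrite -nneseries_esumT => [|i]; last by rewrite lee_fin sqr_ge0.
apply: lime_le; first by apply: is_cvg_nneseries => i _ _; rewrite lee_fin sqr_ge0.
apply: nearW => k; rewrite sumEFin lee_fin.
apply: le_trans (ler_sum _ (fun i _ => sqr_inv_even_le R (a + i))) _.
rewrite (telescope_sumr_eq (fun i => - tail_weight R (a + i))) => [|//|i _]; last first.
  by rewrite addnS opprK addrC.
by rewrite addn0 opprK gerDr oppr_le0 invr_ge0.
Qed.

Lemma esum_inv_dist_sqr (R : realType) (n a : nat) :
  (\esum_(j in [set j | admissible n j /\ (2 * (a.+1)%:Z <= `|n%:Z - j|)%R])
      (inv_dist R n j ^+ 2)%:E <= (2 * tail_weight R a)%:E)%E.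
Proof.
set D := [set j | admissible n j /\ _].
pose e (s : bool) (i : nat) : int := n%:Z + (-1) ^+ s * (2 * (a + i).+1)%:Z.
have e_inj s : set_inj [set: nat] (e s) by move=> i j _ _; case: s; rewrite /e /=; lia.
have e_dist s i : `|n%:Z - e s i| = (2 * (a + i).+1)%N by case: s; rewrite /e /=; lia.
have side s B : D `&` B `<=` e s @` [set: nat] ->
    (\esum_(j in D `&` B) (inv_dist R n j ^+ 2)%:E <= (tail_weight R a)%:E)%E.
  move=> DB; apply: le_trans (esumS _ DB) _; rewrite esum_image //.
  by under eq_esum do rewrite /inv_dist e_dist; exact: esum_sqr_inv_even.
rewrite (esumID [set j | (n%:Z < j)%R]) => [|j _]; last by rewrite lee_fin sqr_ge0.
rewrite mulr_natl mulr2n EFinD; apply: leeD.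
- apply: (side false) => j [[[/dvdzP [q hq] _] j_far] j_gt].
  by exists (`|q|.-1 - a)%N => //; rewrite /e /= in j_gt *; lia.
- apply: (side true) => j [[[/dvdzP [q hq] j_n] j_far] j_le].
  by exists (`|q|.-1 - a)%N => //; rewrite /e /= in j_le *; lia.
Qed.

Lemma esum_inv_dist_sqr_le1 (R : realType) (n : nat) (E : set int) :
  E `<=` admissible n -> (\esum_(j in E) (inv_dist R n j ^+ 2)%:E <= 1%:E)%E.
Proof.
move=> EA; apply: le_trans (esumS _ _) (le_trans (esum_inv_dist_sqr R n 0) _).
  by move=> j /EA j_adm; split=> //; case: j_adm => /dvdzP [q hq] j_n; lia.
by rewrite lee_fin /tail_weight mulfV.
Qed.

Lemma esum_inv_dist_sqr_far (R : realType) (n : nat) (E : set int) : (0 < n)%N ->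
  E `<=` [set j | admissible n j /\ (n%:Z < 2 * `|n%:Z - j|)%R] ->
  (\esum_(j in E) (inv_dist R n j ^+ 2)%:E <= ((2 / Num.sqrt n%:R) ^+ 2)%:E)%E.
Proof.
move=> n0 EA; apply: le_trans (esumS _ _) (le_trans (esum_inv_dist_sqr R n (n %/ 4)) _).
  by move=> j /EA [j_adm j_far]; split=> //; case: j_adm => /dvdzP [q hq] j_n; lia.
rewrite lee_fin /tail_weight expr_div_n sqr_sqrtr //.
have n_le : (n%:R : R) <= 2 * (2 * (2 * (n %/ 4) + 1))%:R.
  by rewrite -natrM ler_nat; lia.
set x := (2 * (2 * _ + 1))%:R in n_le *.
have x0 : 0 < x by rewrite ltr0n; lia.
have nR0 : (0 : R) < n%:R by rewrite ltr0n.
rewrite ler_pdivlMr // mulrAC ler_pdivrMr //; lra.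
Qed.

Lemma sqrt_fineK (R : realType) (X : \bar R) : (0 <= X)%E -> (X < +oo)%E ->
  ((Num.sqrt (fine X)) ^+ 2)%:E = X.
Proof. by move=> X0 Xoo; rewrite sqr_sqrtr ?fine_ge0 // fineK // ge0_fin_numE. Qed.

Lemma norm2Z_ge0 (R : realType) (r : int -> R) : 0 <= norm2Z r.
Proof. exact: sqrtr_ge0. Qed.

Lemma tail2Z_ge0 (R : realType) (r : int -> R) (n : nat) : 0 <= tail2Z r n.
Proof. exact: sqrtr_ge0. Qed.

Lemma norm2Z_le_rho_tilde (R : realType) (r : int -> R) (n : nat) :
  norm2Z r * (2 / Num.sqrt n%:R) <= rho_tilde r n.
Proof. by rewrite /rho_tilde mulrA [norm2Z r * 2]mulrC lerDr tail2Z_ge0. Qed.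

Lemma rho_tilde_ge0 (R : realType) (r : int -> R) (n : nat) : 0 <= rho_tilde r n.
Proof.
apply: le_trans (norm2Z_le_rho_tilde r n).
by rewrite mulr_ge0 ?norm2Z_ge0 // divr_ge0 ?sqrtr_ge0.
Qed.

Lemma evenz_add_admissible (n : nat) (m j : int) :
  (2 %| m - n%:Z)%Z -> admissible n j -> evenz (m + j).
Proof.
move=> /dvdzP [q hq] [/dvdzP [q' hq'] _]; apply/dvdzP; exists (q + q' + n%:Z); lia.
Qed.

Definition chain_kernel (R : realType) (r : int -> R) (n : nat) (m j : int) : R :=
  r (m + j) / `|n%:Z - j|%:~R.

Definition chain_rowsum (R : realType) (r : int -> R) (n : nat) (m : int) : \bar R :=
  (\esum_(j in admissible n) (chain_kernel r n m j)%:E)%E.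

Section kernel_bounds.
Variables (R : realType) (r : int -> R) (n : nat).
Hypothesis r_ge0 : forall k, evenz k -> 0 <= r k.
Hypothesis r_l2 : l2_2Z r.

Lemma sqnorm2ZE : sqnorm2Z r = (norm2Z r ^+ 2)%:E.
Proof. by rewrite sqrt_fineK //; apply: esum_ge0 => k _; rewrite lee_fin sqr_ge0. Qed.

Lemma esum_tail_sqrE :
  (\esum_(k in [set k | evenz k /\ (n%:Z <= `|k|)%R]) (r k ^+ 2)%:E)%E
    = (tail2Z r n ^+ 2)%:E.
Proof.
rewrite sqrt_fineK //; first by apply: esum_ge0 => k _; rewrite lee_fin sqr_ge0.
by apply: le_lt_trans r_l2; apply: esumS => k [].
Qed.

Lemma chain_kernel_ge0 (m j : int) :
  (2 %| m - n%:Z)%Z -> admissible n j -> 0 <= chain_kernel r n m j.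
Proof.
move=> m_par j_adm; apply: mulr_ge0; last by rewrite invr_ge0 ler0z.
exact: r_ge0 (evenz_add_admissible m_par j_adm).
Qed.

Lemma chain_rowsum_ge0 (m : int) : (2 %| m - n%:Z)%Z -> (0 <= chain_rowsum r n m)%E.
Proof. by move=> m_par; apply: esum_ge0 => j j_adm; rewrite lee_fin chain_kernel_ge0. Qed.

Lemma esum_chain_kernel_le (m : int) (E S : set int) (c b : R) :
  (2 %| m - n%:Z)%Z -> E `<=` admissible n -> (forall j, E j -> S (m + j)) ->
  0 <= c -> 0 <= b ->
  (\esum_(k in S) (r k ^+ 2)%:E <= (c ^+ 2)%:E)%E ->
  (\esum_(j in E) (inv_dist R n j ^+ 2)%:E <= (b ^+ 2)%:E)%E ->
  (\esum_(j in E) (chain_kernel r n m j)%:E <= (c * b)%:E)%E.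
Proof.
move=> m_par EA ES c0 b0 rc wb.
have f0 j : E j -> 0 <= r (m + j).
  by move=> /EA j_adm; exact: r_ge0 (evenz_add_admissible m_par j_adm).
have g0 j : E j -> 0 <= inv_dist R n j by rewrite invr_ge0 ler0z.
apply: (esum_Cauchy_Schwarz f0 g0 c0 b0 _ wb).
apply: le_trans rc; apply: (esum_comp_le (fun k => (r k ^+ 2)%:E)) => //.
by move=> i j _ _ /addrI.
Qed.

Lemma esum_chain_kernel_le_norm (m : int) (E : set int) :
  (2 %| m - n%:Z)%Z -> E `<=` admissible n ->
  (\esum_(j in E) (chain_kernel r n m j)%:E <= (norm2Z r)%:E)%E.
Proof.
move=> m_par EA; rewrite -[norm2Z r]mulr1.
apply: (esum_chain_kernel_le m_par EA (fun j Ej => evenz_add_admissible m_par (EA j Ej))).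
- exact: norm2Z_ge0.
- exact: ler01.
- by rewrite -sqnorm2ZE.
- by rewrite expr1n; exact: esum_inv_dist_sqr_le1.
Qed.

Lemma chain_rowsum_le_norm (m : int) :
  (2 %| m - n%:Z)%Z -> (chain_rowsum r n m <= (norm2Z r)%:E)%E.
Proof. by move=> m_par; exact: esum_chain_kernel_le_norm. Qed.

Lemma esum_chain_kernel_far (m : int) (E : set int) : (0 < n)%N -> (2 %| m - n%:Z)%Z ->
  E `<=` [set j | admissible n j /\ (n%:Z < 2 * `|n%:Z - j|)%R] ->
  (\esum_(j in E) (chain_kernel r n m j)%:E <= (norm2Z r * (2 / Num.sqrt n%:R))%:E)%E.
Proof.
move=> n0 m_par EF; have EA j : E j -> admissible n j by move=> /EF [].
apply: (esum_chain_kernel_le m_par EA (fun j Ej => evenz_add_admissible m_par (EA j Ej))).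
- exact: norm2Z_ge0.
- by rewrite divr_ge0 ?sqrtr_ge0.
- by rewrite -sqnorm2ZE.
- exact: esum_inv_dist_sqr_far.
Qed.

Lemma chain_rowsum_le_rho (m : int) : (0 < n)%N -> (2 %| m - n%:Z)%Z ->
  2 * `|m - n%:Z| <= n%:Z -> (chain_rowsum r n m <= (rho_tilde r n)%:E)%E.
Proof.
move=> n0 m_par m_near; rewrite /chain_rowsum.
rewrite (esumID [set j | (n%:Z <= `|m + j|)%R]) => [|j j_adm]; last first.
  by rewrite lee_fin chain_kernel_ge0.
rewrite /rho_tilde -mulrA mulrCA EFinD; apply: leeD.
- rewrite -[tail2Z r n]mulr1.
  have EA : admissible n `&` [set j | (n%:Z <= `|m + j|)%R] `<=` admissible n.
    by move=> j [].
  apply: (esum_chain_kernel_le m_par EA (S := [set k | evenz k /\ (n%:Z <= `|k|)%R])).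
  + by move=> j [j_adm j_tail]; split=> //; exact: evenz_add_admissible j_adm.
  + exact: tail2Z_ge0.
  + exact: ler01.
  + by rewrite esum_tail_sqrE.
  + by rewrite expr1n; exact: esum_inv_dist_sqr_le1.
- apply: esum_chain_kernel_far => // j [j_adm /negP]; rewrite -ltNge => j_near.
  by split=> //; lia.
Qed.

Lemma esum_chain_kernel_rowsum_le (m : int) : (0 < n)%N -> (2 %| m - n%:Z)%Z ->
  (\esum_(j in admissible n) ((chain_kernel r n m j)%:E * chain_rowsum r n j)
     <= (2 * norm2Z r * rho_tilde r n)%:E)%E.
Proof.
move=> n0 m_par; set N := norm2Z r; set rho := rho_tilde r n.
have w0 (B : set int) j : (admissible n `&` B) j -> (0 <= (chain_kernel r n m j)%:E)%E.
  by move=> [j_adm _]; rewrite lee_fin chain_kernel_ge0.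
rewrite (esumID [set j | (2 * `|j - n%:Z| <= n%:Z)%R]) => [|j j_adm]; last first.
  by rewrite mule_ge0 ?lee_fin ?chain_kernel_ge0 ?chain_rowsum_ge0 //; case: j_adm.
have near : (\esum_(j in admissible n `&` [set j | (2 * `|j - n%:Z| <= n%:Z)%R])
    ((chain_kernel r n m j)%:E * chain_rowsum r n j) <= (rho * N)%:E)%E.
  apply: le_trans (esum_mul_le (rho_tilde_ge0 r n) (@w0 _) _) _.
    by move=> j [[j_par _] j_near]; exact: chain_rowsum_le_rho.
  rewrite EFinM lee_wpmul2l ?lee_fin ?rho_tilde_ge0 //.
  by rewrite esum_chain_kernel_le_norm // => j [].
have far : (\esum_(j in admissible n `&` ~` [set j | (2 * `|j - n%:Z| <= n%:Z)%R])
    ((chain_kernel r n m j)%:E * chain_rowsum r n j)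
      <= (N * (N * (2 / Num.sqrt n%:R)))%:E)%E.
  apply: le_trans (esum_mul_le (norm2Z_ge0 r) (@w0 _) _) _.
    by move=> j [[j_par _] _]; exact: chain_rowsum_le_norm.
  rewrite EFinM lee_wpmul2l ?lee_fin ?norm2Z_ge0 // esum_chain_kernel_far //.
  by move=> j [j_adm /negP]; rewrite -ltNge => j_far; split=> //; lia.
apply: le_trans (leeD near far) _; rewrite -EFinD lee_fin.
have := ler_wpM2l (norm2Z_ge0 r) (norm2Z_le_rho_tilde r n); rewrite -/N -/rho; nra.
Qed.

End kernel_bounds.

Definition admissible_seqs (n s : nat) : set (seq int) :=
  [set js | size js = s /\ forall j, j \in js -> admissible n j].

Section sigma1_recursion.
Variables (R : realType) (r : int -> R) (n : nat).
Hypothesis r_ge0 : forall k, evenz k -> 0 <= r k.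

Lemma chain_term_ge0 (m : int) (js : seq int) : (2 %| m - n%:Z)%Z ->
  (forall j, j \in js -> admissible n j) -> 0 <= chain_term r n m js.
Proof.
elim: js m => [|j js IH] m m_par js_adm /=; first exact: ler01.
have j_adm : admissible n j by apply: js_adm; rewrite mem_head.
rewrite mulr_ge0 ?(chain_kernel_ge0 r_ge0 m_par j_adm) // IH //; first by case: j_adm.
by move=> k k_js; apply: js_adm; rewrite in_cons k_js orbT.
Qed.

Lemma sigma1_0_le (m : int) : (sigma1 r n 0 m <= 1%:E)%E.
Proof.
rewrite /sigma1; apply: le_trans (esumS (B := [set [::] : seq int]) _ _) _.
  by case=> [|? ?] [].
by rewrite esum_set1.
Qed.

Lemma sigma1_S_le (s : nat) (m : int) : (2 %| m - n%:Z)%Z ->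
  (sigma1 r n s.+1 m
     <= \esum_(j in admissible n) ((chain_kernel r n m j)%:E * sigma1 r n s j))%E.
Proof.
move=> m_par; rewrite /sigma1 -/(admissible_seqs n s.+1) -/(admissible_seqs n s).
set P := admissible n `*`` (fun=> admissible_seqs n s).
apply: le_trans (esumS (B := (fun k => k.1 :: k.2) @` P) _ _) _.
  case=> [|j js] [//= [size_js] js_adm].
  exists (j, js) => //; split; first by apply: js_adm; rewrite mem_head.
  by split=> // k k_js; apply: js_adm; rewrite in_cons k_js orbT.
rewrite esum_image => [|[? ?] [? ?] _ _ /= [-> ->] //].
rewrite /P -(esum_esum (a := fun j js => (chain_term r n m (j :: js))%:E));
  last by move=> j js j_adm [_ js_adm]; rewrite lee_fin chain_term_ge0 // => k;
    rewrite in_cons => /predU1P [->|/js_adm].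
apply: le_esum => j j_adm /=; under eq_esum do rewrite EFinM.
apply: esumZl_le => [|js [_ js_adm]]; first exact: chain_kernel_ge0.
by rewrite lee_fin chain_term_ge0 //; case: j_adm.
Qed.

Lemma sigma1_S_le_rowsum (s : nat) (m : int) (X : R) : (2 %| m - n%:Z)%Z -> 0 <= X ->
  (forall j, (2 %| j - n%:Z)%Z -> (sigma1 r n s j <= X%:E)%E) ->
  (sigma1 r n s.+1 m <= X%:E * chain_rowsum r n m)%E.
Proof.
move=> m_par X0 sX; apply: le_trans (sigma1_S_le s m_par) _.
apply: esum_mul_le => // [j j_adm|j [j_par _]]; last exact: sX.
by rewrite lee_fin chain_kernel_ge0.
Qed.

Lemma sigma1_SS_le (s : nat) (m : int) (X : R) :
  (0 < n)%N -> l2_2Z r -> (2 %| m - n%:Z)%Z -> 0 <= X ->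
  (forall j, (2 %| j - n%:Z)%Z -> (sigma1 r n s j <= X%:E)%E) ->
  (sigma1 r n s.+2 m <= (X * (2 * norm2Z r * rho_tilde r n))%:E)%E.
Proof.
move=> n0 r_l2 m_par X0 sX; apply: le_trans (sigma1_S_le s.+1 m_par) _.
apply: le_trans (_ : _ <= \esum_(j in admissible n)
    (X%:E * ((chain_kernel r n m j)%:E * chain_rowsum r n j)))%E _.
  apply: le_esum => j j_adm; rewrite muleCA lee_wpmul2l ?lee_fin ?chain_kernel_ge0 //.
  by apply: sigma1_S_le_rowsum => //; case: j_adm.
rewrite EFinM; apply: le_trans (esumZl_le _ _) _ => // [j j_adm|].
  have [j_par _] := j_adm.
  by apply: mule_ge0; rewrite ?lee_fin ?chain_kernel_ge0 ?chain_rowsum_ge0.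
by rewrite lee_wpmul2l ?lee_fin // esum_chain_kernel_rowsum_le.
Qed.

End sigma1_recursion.

Theorem lemma3 (R : realType) (r : int -> R)
  (hr2 : l2_2Z r) (hr0 : forall k, evenz k -> 0 <= r k)
  (n : nat) (hn : (4 <= n)%N) :
  (forall m : int, (2 %| (m - n%:Z))%Z -> 2 * `|m - n%:Z| <= n%:Z ->
      (sigma1 r n 1 m <= (rho_tilde r n)%:E)%E)
  /\ (forall m : int, (2 %| (m - n%:Z))%Z ->
      (sigma1 r n 1 m <= (norm2Z r)%:E)%E)
  /\ (forall (p : nat) (m : int), (1 <= p)%N -> (2 %| (m - n%:Z))%Z ->
      (sigma1 r n (2 * p) m <= ((2 * norm2Z r * rho_tilde r n) ^+ p)%:E)%E)
  /\ (forall (p : nat) (m : int), (2 %| (m - n%:Z))%Z ->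
      (sigma1 r n (2 * p).+1 m
         <= (norm2Z r * (2 * norm2Z r * rho_tilde r n) ^+ p)%:E)%E).
Proof.
have n0 : (0 < n)%N by apply: leq_trans hn.
have K0 : 0 <= 2 * norm2Z r * rho_tilde r n.
  by rewrite !mulr_ge0 ?norm2Z_ge0 ?rho_tilde_ge0.
have sigma1_1 m : (2 %| m - n%:Z)%Z -> (sigma1 r n 1 m <= chain_rowsum r n m)%E.
  move=> m_par; rewrite -[leRHS]mul1e.
  apply: (sigma1_S_le_rowsum hr0 m_par ler01) => j _; exact: sigma1_0_le.
have sigma1_even p m : (2 %| m - n%:Z)%Z ->
    (sigma1 r n (2 * p) m <= ((2 * norm2Z r * rho_tilde r n) ^+ p)%:E)%E.
  elim: p m => [|p IH] m m_par; first by rewrite expr0; exact: sigma1_0_le.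
  by rewrite mulnS exprSr; apply: sigma1_SS_le; rewrite ?exprn_ge0.
split; [|split; [|split]].
- move=> m m_par m_near; apply: le_trans (sigma1_1 m m_par) _.
  exact: chain_rowsum_le_rho.
- by move=> m m_par; apply: le_trans (sigma1_1 m m_par) (chain_rowsum_le_norm _ _ _).
- by move=> p m _; exact: sigma1_even.
- move=> p m m_par; rewrite mulrC EFinM.
  apply: le_trans (sigma1_S_le_rowsum hr0 m_par (exprn_ge0 p K0) (sigma1_even p)) _.
  by rewrite lee_wpmul2l ?lee_fin ?exprn_ge0 // chain_rowsum_le_norm.
Qed.
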